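(* Let $1\leq k<n$ and let $G$ be a graph of order $n$. Then $q_{k+1}(G)=n-2$ if and only if the complement $\overline{G}$ has at least $k$ balanced bipartite components or at least $k+1$ bipartite components.
   Context: All graphs are finite and simple. For a graph $G$ with adjacency matrix $A$ and diagonal degree matrix $D$, the signless Laplacian is $Q(G)=A+D$; its eigenvalues are denoted $q_1(G)\geq q_2(G)\geq\cdots\geq q_n(G)$. $\overline{G}$ denotes the complement of $G$. A connected bipartite graph is called balanced if its two vertex classes have equal size, and unbalanced otherwise; an isolated vertex is considered to be an (unbalanced) bipartite component with one empty vertex class. A bipartite component of a graph means a connected component that is bipartite (including isolated vertices). *)

From HB Require Import structures.
From mathcomp Require Import all_boot all_order all_algebra all_field.
Set Implicit Arguments. Unset Strict Implicit. Unset Printing Implicit Defensive.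
Import Order.TTheory GRing.Theory Num.Theory.

Definition simple_graph (n : nat) (e : rel 'I_n) : Prop :=
  symmetric e /\ irreflexive e.

Definition compl_graph (n : nat) (e : rel 'I_n) : rel 'I_n :=
  fun i j => (i != j) && ~~ e i j.

Local Open Scope ring_scope.

Definition adj_mx (n : nat) (e : rel 'I_n) : 'M[algC]_n :=
  \matrix_(i, j) (e i j)%:R.
Definition deg (n : nat) (e : rel 'I_n) (i : 'I_n) : nat := #|[set j | e i j]|.
Definition deg_mx (n : nat) (e : rel 'I_n) : 'M[algC]_n :=
  \matrix_(i, j) ((i == j)%:R * (deg e i)%:R).
Definition signless_lap (n : nat) (e : rel 'I_n) : 'M[algC]_n :=
  adj_mx e + deg_mx e.

Definition eig_seq (n : nat) (M : 'M[algC]_n) : seq algC :=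
  sval (closed_field_poly_normal (char_poly M)).
Definition eigs_desc (n : nat) (M : 'M[algC]_n) : seq algC :=
  sort (fun x y : algC => y <= x) (eig_seq M).

(* q_i(G), 1-based: q 1 is the largest eigenvalue. *)
Definition q_eig (n : nat) (e : rel 'I_n) (i : nat) : algC :=
  nth 0 (eigs_desc (signless_lap e)) i.-1.

Definition components (n : nat) (e : rel 'I_n) : {set {set 'I_n}} :=
  [set [set y | connect e x y] | x : 'I_n].

Definition bipartite_on (n : nat) (e : rel 'I_n) (C : {set 'I_n}) : bool :=
  [exists f : {ffun 'I_n -> bool},
    [forall x in C, forall y in C, e x y ==> (f x != f y)]].

Definition balanced_bipartite_on (n : nat) (e : rel 'I_n) (C : {set 'I_n}) : bool :=
  [exists f : {ffun 'I_n -> bool},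
    [forall x in C, forall y in C, e x y ==> (f x != f y)] &&
    (#|[set x in C | f x]| == #|[set x in C | ~~ f x]|)].

Definition n_bip_comp (n : nat) (e : rel 'I_n) : nat :=
  #|[set C in components e | bipartite_on e C]|.
Definition n_bal_bip_comp (n : nat) (e : rel 'I_n) : nat :=
  #|[set C in components e | balanced_bipartite_on e C]|.

From HB Require Import structures.
From mathcomp Require Import all_boot all_order all_algebra all_field.
From mathcomp Require Import ring zify.
Import Order.TTheory GRing.Theory Num.Theory.

Set Implicit Arguments. Unset Strict Implicit. Unset Printing Implicit Defensive.
Local Open Scope ring_scope.

(* With Q = Q(G) and c = n - 2, degrees give Q - cI = J - Q(f) (J all-ones),
   so the form of Q - cI at x is |sum x|^2 - x Q(f) x^*.  The form of Q(f),
   1/2 sum_{edges ij} |x_i + x_j|^2, is >= 0 and vanishes exactly on the span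
   K of the signed indicators of the bipartite components of f.  Counting
   eigenvalues by dimension (a subspace where the form of Q - cI is <= 0,
   resp. >= 0, meets the eigenvectors > c, resp. < c, trivially) yields, for
   s = #{q_i > c} and t = #{q_i >= c}: s <= 1, t <= dim (K ∩ 1^⊥) + 1,
   #bip <= t, and #bal < t when #bal > 0 (adjoin 1_X for a balanced component
   X ∪ Y).  As q_{k+1} = c iff s <= k < t, the theorem follows, since
   dim (K ∩ 1^⊥) < #bip if some bipartite component is unbalanced, and
   #bal = #bip otherwise. *)

Section SortedDescending.
Variable R : numDomainType.
Local Notation desc := (fun x y : R => y <= x).

Section Sorted.
Variable s : seq R.
Hypothesis s_sorted : sorted desc s.

Lemma sorted_desc_nth_le i j :
  (i <= j)%N -> (j < size s)%N -> nth 0 s j <= nth 0 s i.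
Proof.
move=> ij js.
have desc_trans : transitive desc by move=> x y z /= yx zy; apply: le_trans zy yx.
have desc_refl : reflexive desc by [].
apply: (sorted_leq_nth desc_trans desc_refl 0 s_sorted) => //.
by rewrite inE; apply: leq_ltn_trans js.
Qed.

Lemma count_gt_of_prefix (P : pred R) k : (k < size s)%N ->
  (forall i, (i <= k)%N -> P (nth 0 s i)) -> (k < count P s)%N.
Proof.
move=> ks Pk.
rewrite -(cat_take_drop k.+1 s) count_cat.
have : all P (take k.+1 s).
  apply/(all_nthP 0) => i; rewrite size_takel // => ik.
  by rewrite nth_take //; apply: Pk.
by rewrite all_count => /eqP ->; rewrite size_takel // ltnS leq_addr.
Qed.

Lemma count_le_of_suffix (P : pred R) k : (k <= size s)%N ->
  (forall j, (k <= j)%N -> (j < size s)%N -> ~~ P (nth 0 s j)) ->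
  (count P s <= k)%N.
Proof.
move=> ks notP.
rewrite -(cat_take_drop k s) count_cat.
have -> : count P (drop k s) = 0%N.
  apply/eqP; rewrite -leqn0 leqNgt -has_count; apply/negP => /(has_nthP 0) [j].
  rewrite size_drop nth_drop => jl Pj.
  suff: ~~ P (nth 0 s (k + j)) by rewrite Pj.
  by apply: notP; [apply: leq_addr | rewrite -ltn_subRL].
by rewrite addn0 (leq_trans (count_size _ _)) // size_take; case: ltnP.
Qed.
End Sorted.

Lemma nth_sort_desc_eq (l : seq R) (c : R) k :
  all (fun z => z \is Num.real) l -> c \is Num.real -> (k < size l)%N ->
  (nth 0 (sort desc l) k = c) <->
  ((count (fun z => (c < z)%R) l <= k)%N /\ (k < count (fun z => (c <= z)%R) l)%N).
Proof.
move=> l_real c_real kl.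
set s := sort _ l.
have s_perm : perm_eq s l by rewrite perm_sort.
have s_sorted : sorted desc s.
  apply: (@sort_sorted_in _ (fun z : R => z \is Num.real)) => //.
  by move=> x y xr yr /=; rewrite orbC; apply: real_leVge.
have ks : (k < size s)%N by rewrite (perm_size s_perm).
have s_real j : (j < size s)%N -> nth 0 s j \is Num.real.
  by move=> js; apply: (all_nthP 0 _ j js); rewrite (perm_all _ s_perm).
rewrite -!(permP s_perm).
split=> [sk_c | [gt_k k_ge]].
  split; last by apply: count_gt_of_prefix => // i ik /=; rewrite -sk_c sorted_desc_nth_le.
  apply: count_le_of_suffix => [|j kj js /=]; first exact: ltnW.
  by rewrite -sk_c -real_leNgt ?s_real // sorted_desc_nth_le.
have [lt_c|gt_c|//] := real_ltgtP (s_real k ks) c_real.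
- move: k_ge; rewrite ltnNge => /negP; case.
  apply: count_le_of_suffix => [|j kj js /=]; first exact: ltnW.
  by rewrite -real_ltNge ?s_real // (le_lt_trans _ lt_c) // sorted_desc_nth_le.
- move: gt_k; rewrite leqNgt => /negP; case; apply: count_gt_of_prefix => // i ik /=.
  by rewrite (lt_le_trans gt_c) // sorted_desc_nth_le.
Qed.
End SortedDescending.

Lemma count_enum (T : finType) (P : pred T) : count P (enum T) = #|P|.
Proof. by rewrite cardE -size_filter /enum_mem filter_predT. Qed.

Section RankBounds.
Variable F : fieldType.

Lemma private_column_row_free m n (W : 'M[F]_(m, n)) (col : 'I_m -> 'I_n) :
  (forall r, W r (col r) != 0) -> (forall r r', r' != r -> W r' (col r) = 0) ->
  row_free W.
Proof.
move=> W_nz W_priv; apply/row_freeP.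
exists (\matrix_(j, r) ((col r == j)%:R / W r (col r))).
apply/matrixP => r r'; rewrite !mxE (bigD1 (col r')) //= big1 => [|j /negbTE jn].
  rewrite mxE eqxx mul1r addr0; have [<-|rr] := eqVneq r r'; first by rewrite divff.
  by rewrite W_priv ?mul0r // eq_sym.
by rewrite mxE eq_sym jn mul0r mulr0.
Qed.

Lemma rank_add_le_cap m1 m2 n (V : 'M[F]_(m1, n)) (W : 'M[F]_(m2, n)) :
  (\rank V + \rank W <= n + \rank (V :&: W)%MS)%N.
Proof. by rewrite -mxrank_sum_cap leq_add2r rank_leq_col. Qed.

Lemma rank_add_le_of_trivial_cap m1 m2 n (V : 'M[F]_(m1, n)) (W : 'M[F]_(m2, n)) :
  (forall x : 'rV_n, (x <= V)%MS -> (x <= W)%MS -> x = 0) ->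
  (\rank V + \rank W <= n)%N.
Proof.
move=> trivial_cap; apply: leq_trans (rank_add_le_cap V W) _.
suff -> : \rank (V :&: W)%MS = 0%N by rewrite addn0.
apply/eqP; rewrite mxrank_eq0; apply/eqP/row_matrixP => i; rewrite row0.
by apply: trivial_cap; rewrite (submx_trans (row_sub i _)) ?capmxSl ?capmxSr.
Qed.
End RankBounds.

Lemma char_poly_conj (R : comNzRingType) n (Q P D : 'M[R]_n) :
  Q *m P = 1%:M -> char_poly (Q *m D *m P) = char_poly D.
Proof.
move=> QP.
have QP' : map_mx polyC Q *m map_mx polyC P = 1%:M by rewrite -map_mxM QP map_mx1.
have HX : 'X%:M = map_mx polyC Q *m ('X%:M : 'M[{poly R}]_n) *m map_mx polyC P.
  by rewrite scalar_mxC -mulmxA QP' mulmx1.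
rewrite /char_poly /char_poly_mx {1}HX !map_mxM -mulmxBl -mulmxBr.
by rewrite !det_mulmx mulrAC -det_mulmx QP' det1 mul1r.
Qed.

Local Open Scope sesquilinear_scope.

Definition qf n (M : 'M[algC]_n) (x : 'rV[algC]_n) : algC := (x *m M *m x ^t*) 0 0.

Lemma qf_sum n (M : 'M[algC]_n) x :
  qf M x = \sum_i \sum_j x 0 i * M i j * (x 0 j)^*.
Proof.
rewrite /qf !mxE exchange_big /=; apply: eq_bigr => i _.
by rewrite mxE big_distrl /=; apply: eq_bigr => j _; rewrite !mxE.
Qed.

Lemma qf_sub n (M1 M2 : 'M[algC]_n) x : qf (M1 - M2) x = qf M1 x - qf M2 x.
Proof. by rewrite {1}/qf mulmxBr mulmxBl [LHS]mxE; congr (_ + _); rewrite mxE. Qed.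

Lemma qf_all_ones n (x : 'rV[algC]_n) :
  qf (const_mx 1) x = (\sum_y x 0 y) * (\sum_y x 0 y)^*.
Proof.
rewrite qf_sum rmorph_sum mulr_suml; apply: eq_bigr => i _.
by rewrite mulr_sumr; apply: eq_bigr => j _; rewrite mxE mulr1.
Qed.

Lemma weighted_norm_gt0 n (a : 'I_n -> algC) (z : 'rV_n) :
  (forall j, z 0 j != 0 -> 0 < a j) -> z != 0 ->
  0 < \sum_j a j * (z 0 j * (z 0 j)^*).
Proof.
move=> a_pos z_nz.
have term_ge0 j : 0 <= a j * (z 0 j * (z 0 j)^*).
  have [zj0|/a_pos/ltW aj] := eqVneq (z 0 j) 0; first by rewrite zj0 mul0r mulr0.
  by rewrite mulr_ge0 ?mul_conjC_ge0.
rewrite lt_def sumr_ge0 // andbT; apply: contra z_nz => /eqP sum0.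
apply/eqP/rowP => j; rewrite mxE; apply/eqP/negPn/negP => zj.
have /eqP := psumr_eq0P (fun i _ => term_ge0 i) sum0 (i:=j) isT.
by rewrite mulf_eq0 mul_conjC_eq0 (negbTE zj) orbF gt_eqF ?a_pos.
Qed.

(* The sign of the form of A - cI on the
   span of the eigenvectors with eigenvalue > c, >= c or < c bounds the
   dimension of any subspace on which that form has a given sign. *)
Section HermitianCounting.
Variable n : nat.
Variable A : 'M[algC]_n.
Hypothesis A_herm : A \is hermsymmx.
Local Notation U := (spectralmx A).
Local Notation d := (spectral_diag A).

Lemma spectral_mul_adj : U *m U^t* = 1%:M.
Proof. exact/unitarymxP/spectral_unitarymx. Qed.

Lemma spectral_decomp : A = U^t* *m diag_mx d *m U.
Proof.
rewrite -invmx_unitary ?spectral_unitarymx //; apply/orthomx_spectralP.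
exact: hermitian_normalmx.
Qed.

Lemma spectral_diag_real j : d 0 j \is Num.real.
Proof. by have /mxOverP := hermitian_spectral_diag_real A_herm; apply. Qed.

Lemma eig_seq_perm : perm_eq (eig_seq A) [seq d 0 j | j <- enum 'I_n].
Proof.
have adj_mul : U^t* *m U = 1%:M.
  rewrite -invmx_unitary ?spectral_unitarymx // mulVmx //.
  by rewrite unitarymx_unit // spectral_unitarymx.
have cpA : char_poly A = \prod_(j < n) ('X - (d 0 j)%:P).
  rewrite {1}spectral_decomp char_poly_conj // char_poly_trig ?diag_mx_is_trig //.
  by apply: eq_bigr => j _; rewrite mxE eqxx mulr1n.
rewrite /eig_seq; case: closed_field_poly_normal => r /= cp_r.
apply: prod_XsubC_eq.
have /monicP lc := char_poly_monic A.
by rewrite -[LHS]scale1r -lc -cp_r cpA big_map enumT.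
Qed.

Lemma qf_shift_spectral (c : algC) (z : 'rV_n) :
  qf (A - c%:M) (z *m U) = \sum_j (d 0 j - c) * (z 0 j * (z 0 j)^*).
Proof.
have shift_diag : U *m (A - c%:M) *m U^t* = diag_mx d - c%:M.
  move: spectral_decomp spectral_mul_adj; set V := U => AD VV.
  rewrite mulmxBr mulmxBl {1}AD !mulmxA VV mul1mx -mulmxA VV mulmx1.
  by rewrite mul_mx_scalar -scalemxAl VV scalemx1.
have -> : qf (A - c%:M) (z *m U) = qf (diag_mx d - c%:M) z.
  by rewrite /qf -shift_diag trmx_mul map_mxM !mulmxA.
rewrite qf_sum; apply: eq_bigr => i _.
rewrite (bigD1 i) //= big1 => [|j ji].
  by rewrite !mxE eqxx mulr1n addr0 mulrCA mulrA.
by rewrite !mxE eq_sym (negbTE ji) mulr0n subr0 mulr0 mul0r.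
Qed.

Definition select_mx (p : pred 'I_n) : 'M[algC]_(#|p|, n) :=
  \matrix_(r, j) ((enum_val r == j)%:R).
Definition eigenspace_on (p : pred 'I_n) : 'M[algC]_(#|p|, n) := select_mx p *m U.

Lemma rank_eigenspace_on p : \rank (eigenspace_on p) = #|p|.
Proof.
rewrite mxrankMfree; last first.
  by rewrite row_free_unit unitarymx_unit // spectral_unitarymx.
apply/eqP; apply: (@private_column_row_free _ _ _ _ enum_val) => [r|r r' rr].
  by rewrite mxE eqxx oner_neq0.
by rewrite mxE (inj_eq enum_val_inj) (negbTE rr).
Qed.

Lemma eigenspace_onP p x : (x <= eigenspace_on p)%MS ->
  exists2 z : 'rV_n, x = z *m U & forall j, ~~ p j -> z 0 j = 0.
Proof.
move=> /submxP [D ->]; exists (D *m select_mx p); first by rewrite mulmxA.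
move=> j pj; rewrite !mxE big1 // => r _; rewrite mxE.
have [rj|] := eqVneq (enum_val r) j; last by rewrite mulr0.
by have := enum_valP r; rewrite rj => pj'; case/negP: pj.
Qed.

Lemma qf_eigenspace_ge0 (c : algC) x :
  (x <= eigenspace_on [pred j | (c <= d 0 j)%R])%MS ->
  0 <= qf (A - c%:M) x.
Proof.
move=> /eigenspace_onP [z -> z_supp]; rewrite qf_shift_spectral.
apply: sumr_ge0 => j _; have [cj|/z_supp->] := boolP (c <= d 0 j).
  by rewrite mulr_ge0 ?subr_ge0 ?mul_conjC_ge0.
by rewrite mul0r mulr0.
Qed.

Lemma qf_eigenspace_gt0 (c : algC) x :
  (x <= eigenspace_on [pred j | (c < d 0 j)%R])%MS ->
  x != 0 -> 0 < qf (A - c%:M) x.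
Proof.
move=> /eigenspace_onP [z -> z_supp] x_nz; rewrite qf_shift_spectral.
apply: weighted_norm_gt0 => [j|]; last by apply: contra x_nz => /eqP->; rewrite mul0mx.
by apply: contraR => cj; rewrite z_supp // inE -subr_gt0.
Qed.

Lemma qf_eigenspace_lt0 (c : algC) x :
  (x <= eigenspace_on [pred j | (d 0 j < c)%R])%MS ->
  x != 0 -> qf (A - c%:M) x < 0.
Proof.
move=> /eigenspace_onP [z -> z_supp] x_nz; rewrite qf_shift_spectral -oppr_gt0 -sumrN.
under eq_bigr => j _ do rewrite -mulNr opprB.
apply: weighted_norm_gt0 => [j|]; last by apply: contra x_nz => /eqP->; rewrite mul0mx.
by apply: contraR => cj; rewrite z_supp // inE -subr_gt0.
Qed.

Definition n_eig_gt (c : algC) : nat := #|[pred j | (c < d 0 j)%R]|.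
Definition n_eig_ge (c : algC) : nat := #|[pred j | (c <= d 0 j)%R]|.

Lemma nth_eigs_desc_eq (c : algC) k : c \is Num.real -> (k < n)%N ->
  nth 0 (eigs_desc A) k = c <-> (n_eig_gt c <= k)%N /\ (k < n_eig_ge c)%N.
Proof.
move=> c_real kn; have eig_perm := eig_seq_perm.
have eig_real : all (fun z => z \is Num.real) (eig_seq A).
  by rewrite (perm_all _ eig_perm) all_map; apply/allP => j _ /=; apply: spectral_diag_real.
have eig_size : size (eig_seq A) = n.
  by rewrite (perm_size eig_perm) size_map size_enum_ord.
rewrite /eigs_desc (nth_sort_desc_eq eig_real c_real) ?eig_size //.
by rewrite !(permP eig_perm) !count_map -!enumT !count_enum.
Qed.

(* A subspace on which the form of A - cI is <= 0 meets the eigenspace of the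
   eigenvalues > c trivially. *)
Lemma n_eig_gt_add_rank_le (c : algC) m (W : 'M_(m, n)) :
  (forall x, (x <= W)%MS -> qf (A - c%:M) x <= 0) -> (n_eig_gt c + \rank W <= n)%N.
Proof.
move=> W_npos; rewrite /n_eig_gt -rank_eigenspace_on.
apply: rank_add_le_of_trivial_cap => x xE xW; apply/eqP/negPn/negP => x_nz.
by have := lt_le_trans (qf_eigenspace_gt0 xE x_nz) (W_npos x xW); rewrite ltxx.
Qed.

Lemma n_eig_ge_add_rank_le (c : algC) m (W : 'M_(m, n)) p (K : 'M_(p, n)) :
  (forall x, (x <= W)%MS -> 0 <= qf (A - c%:M) x -> (x <= K)%MS) ->
  (n_eig_ge c + \rank W <= n + \rank (K :&: W))%N.
Proof.
move=> W_K; rewrite /n_eig_ge -rank_eigenspace_on.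
apply: leq_trans (rank_add_le_cap _ W) _; rewrite leq_add2l; apply: mxrankS.
rewrite sub_capmx capmxSr andbT; apply/row_subP => i; set x := row i _.
have xE : (x <= eigenspace_on [pred j | (c <= d 0 j)%R])%MS.
  exact: submx_trans (row_sub _ _) (capmxSl _ _).
have xW : (x <= W)%MS by apply: submx_trans (row_sub _ _) (capmxSr _ _).
exact: W_K xW (qf_eigenspace_ge0 xE).
Qed.

Lemma rank_le_n_eig_ge (c : algC) m (W : 'M_(m, n)) : c \is Num.real ->
  (forall x, (x <= W)%MS -> 0 <= qf (A - c%:M) x) -> (\rank W <= n_eig_ge c)%N.
Proof.
move=> c_real W_nneg; set lt_c := [pred j | (d 0 j < c)%R].
have split_n : (#|lt_c| + n_eig_ge c)%N = n.
  rewrite -[RHS](card_ord n) -(cardC lt_c); congr (_ + _)%N.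
  by apply: eq_card => j; rewrite !inE real_leNgt ?spectral_diag_real.
suff : (\rank W + #|lt_c| <= n)%N by lia.
rewrite -rank_eigenspace_on; apply: rank_add_le_of_trivial_cap => x xW xE.
apply/eqP/negPn/negP => x_nz.
by have := le_lt_trans (W_nneg x xW) (qf_eigenspace_lt0 xE x_nz); rewrite ltxx.
Qed.
End HermitianCounting.

Section SignlessLaplacianForm.
Variable n : nat.
Variable f : rel 'I_n.
Hypothesis f_sym : symmetric f.

Definition edge_antisym (x : 'rV[algC]_n) : Prop :=
  forall i j, f i j -> x 0 i + x 0 j = 0.

Lemma natr_deg i : (deg f i)%:R = \sum_j (f i j)%:R :> algC.
Proof.
rewrite /deg -sum1_card natr_sum big_mkcond /=; apply: eq_bigr => j _.
by rewrite inE; case: (f i j).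
Qed.

Lemma qf_signless_lap (x : 'rV[algC]_n) :
  2%:R * qf (signless_lap f) x =
  \sum_i \sum_j (f i j)%:R * ((x 0 i + x 0 j) * (x 0 i + x 0 j)^*).
Proof.
set S1 := \sum_i \sum_j (f i j)%:R * (x 0 i * (x 0 j)^*).
set S2 := \sum_i \sum_j (f i j)%:R * (x 0 i * (x 0 i)^*).
have sum_delta (F : 'I_n -> algC) i : \sum_j (i == j)%:R * F j = F i.
  rewrite (bigD1 i) //= big1 ?eqxx ?mul1r ?addr0 // => j ji.
  by rewrite eq_sym (negbTE ji) mul0r.
have qf_S : qf (signless_lap f) x = S1 + S2.
  rewrite qf_sum -big_split /=; apply: eq_bigr => i _.
  have -> : \sum_j x 0 i * signless_lap f i j * (x 0 j)^* =
     \sum_j (f i j)%:R * (x 0 i * (x 0 j)^*) +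
     \sum_j (i == j)%:R * ((deg f i)%:R * (x 0 i * (x 0 j)^*)).
    by rewrite -big_split /=; apply: eq_bigr => j _; rewrite !mxE; ring.
  by rewrite sum_delta natr_deg mulr_suml.
have sym_S (F : 'I_n -> 'I_n -> algC) :
    \sum_i \sum_j (f i j)%:R * F j i = \sum_i \sum_j (f i j)%:R * F i j.
  by rewrite exchange_big /=; apply: eq_bigr => i _; apply: eq_bigr => j _; rewrite f_sym.
have -> : \sum_i \sum_j (f i j)%:R * ((x 0 i + x 0 j) * (x 0 i + x 0 j)^*)
    = S1 + S2 + (\sum_i \sum_j (f i j)%:R * (x 0 j * (x 0 i)^*) +
                 \sum_i \sum_j (f i j)%:R * (x 0 j * (x 0 j)^*)).
  rewrite -!big_split /=; apply: eq_bigr => i _.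
  by rewrite -!big_split /=; apply: eq_bigr => j _; rewrite rmorphD /=; ring.
by rewrite (sym_S (fun j i => x 0 j * (x 0 i)^*)) (sym_S (fun j i => x 0 j * (x 0 j)^*))
  qf_S mulr2n mulrDl mul1r.
Qed.

Lemma edge_term_ge0 (b : bool) (z : algC) : 0 <= b%:R * (z * z^*).
Proof. by rewrite mulr_ge0 ?ler0n ?mul_conjC_ge0. Qed.

Lemma qf_signless_lap_ge0 x : 0 <= qf (signless_lap f) x.
Proof.
rewrite -(pmulr_rge0 _ (ltr0n _ 2)) qf_signless_lap.
by apply: sumr_ge0 => i _; apply: sumr_ge0 => j _; apply: edge_term_ge0.
Qed.

Lemma qf_signless_lap_eq0 x : qf (signless_lap f) x = 0 -> edge_antisym x.
Proof.
move=> qf0 i j fij; have := qf_signless_lap x; rewrite qf0 mulr0 => /esym sum0.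
have row_ge0 i0 : true -> 0 <= \sum_j (f i0 j)%:R * ((x 0 i0 + x 0 j) * (x 0 i0 + x 0 j)^*).
  by move=> _; apply: sumr_ge0 => j0 _; apply: edge_term_ge0.
have row0 := psumr_eq0P row_ge0 sum0 (i:=i) isT.
have /eqP := psumr_eq0P (fun j _ => edge_term_ge0 (f i j) (x 0 i + x 0 j)) row0 (i:=j) isT.
by rewrite fij mul1r mul_conjC_eq0 => /eqP.
Qed.

Lemma edge_antisym_qf0 x : edge_antisym x -> qf (signless_lap f) x = 0.
Proof.
move=> x_anti; have := qf_signless_lap x; rewrite big1 => [|i _]; last first.
  rewrite big1 // => j _; case fij: (f i j); last by rewrite mul0r.
  by rewrite x_anti // mul0r mulr0.
by move/eqP; rewrite mulf_eq0 pnatr_eq0 /= => /eqP.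
Qed.

(* Edge-antisymmetry is a linear condition, inherited by row spaces. *)
Lemma edge_antisym_submx m (W : 'M[algC]_(m, n)) x :
  (forall r, edge_antisym (row r W)) -> (x <= W)%MS -> edge_antisym x.
Proof.
move=> W_anti /submxP [D ->] i j fij; rewrite !mxE -big_split /= big1 // => r _.
by rewrite -mulrDr; have := W_anti r i j fij; rewrite !mxE => ->; rewrite mulr0.
Qed.
End SignlessLaplacianForm.

Section BipartiteKernel.
Variable n : nat.
Variable f : rel 'I_n.
Hypothesis f_sym : symmetric f.

Definition component_of (y : 'I_n) : {set 'I_n} := [set z | connect f y z].

Lemma component_ofP C : C \in components f -> exists y, C = component_of y.
Proof. by case/imsetP => y _ ->; exists y. Qed.

Lemma component_of_in y : component_of y \in components f.
Proof. by apply/imsetP; exists y. Qed.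

Lemma component_of_self y : y \in component_of y.
Proof. by rewrite inE connect0. Qed.

Lemma component_eq C y : C \in components f -> y \in C -> C = component_of y.
Proof.
case/component_ofP => y0 -> /[!inE] y0y; apply/setP => z; rewrite !inE.
by rewrite (same_connect (sym_connect_sym f_sym) y0y).
Qed.

Lemma component_edgeE C a b : C \in components f -> f a b -> (a \in C) = (b \in C).
Proof.
move=> C_comp fab; apply/idP/idP => [aC|bC].
  by rewrite (component_eq C_comp aC) inE connect1.
by rewrite (component_eq C_comp bC) inE connect1 // f_sym.
Qed.

Lemma component_ind (Q : 'I_n -> Prop) y0 : Q y0 ->
  (forall a b, a \in component_of y0 -> f a b -> Q a -> Q b) ->
  forall y, y \in component_of y0 -> Q y.
Proof.
move=> Q0 Q_step y; rewrite inE => /connectP [p y0p ->] {y}.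
suff: forall a, connect f y0 a -> Q a -> path f a p -> Q (last a p).
  by apply; rewrite ?connect0.
elim: p {y0p} => [|b p IH] a y0a Qa //= /andP [fab bp].
apply: IH bp; first exact: connect_trans y0a (connect1 fab).
by apply: Q_step fab Qa; rewrite inE.
Qed.

Definition proper_colouring (g : {ffun 'I_n -> bool}) (C : {set 'I_n}) : bool :=
  [forall x in C, forall y in C, f x y ==> (g x != g y)].

Lemma proper_colouringP (g : {ffun 'I_n -> bool}) C a b :
  proper_colouring g C -> a \in C -> b \in C -> f a b -> g a != g b.
Proof.
move=> /forall_inP g_prop aC bC.
by move/forall_inP: (g_prop a aC) => /(_ b bC)/implyP.
Qed.

Definition colour_sign (g : {ffun 'I_n -> bool}) y : algC := if g y then 1 else -1.

Lemma colour_sign_sqr (g : {ffun 'I_n -> bool}) y : colour_sign g y * colour_sign g y = 1.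
Proof. by rewrite /colour_sign; case: (g y); rewrite ?mulr1 ?mulrNN ?mulr1. Qed.

Lemma colour_sign_neq0 (g : {ffun 'I_n -> bool}) y : colour_sign g y != 0.
Proof. by rewrite /colour_sign; case: (g y); rewrite ?oppr_eq0 oner_eq0. Qed.

Lemma colour_sign_flip (g : {ffun 'I_n -> bool}) a b :
  g a != g b -> colour_sign g b = - colour_sign g a.
Proof. by rewrite /colour_sign; case: (g a); case: (g b); rewrite ?opprK. Qed.

Definition signed_indicator (g : {ffun 'I_n -> bool}) (C : {set 'I_n}) : 'rV[algC]_n :=
  \row_y (if y \in C then colour_sign g y else 0).

Lemma signed_indicator_antisym (g : {ffun 'I_n -> bool}) C :
  C \in components f -> proper_colouring g C -> edge_antisym f (signed_indicator g C).
Proof.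
move=> C_comp g_prop a b fab; rewrite !mxE -(component_edgeE C_comp fab).
have [aC|] := boolP (a \in C); last by rewrite addr0.
have bC : b \in C by rewrite -(component_edgeE C_comp fab).
by rewrite (colour_sign_flip (proper_colouringP g_prop aC bC fab)) subrr.
Qed.

Lemma natr_card_sum (X : {set 'I_n}) : (#|X|%:R : algC) = \sum_y (y \in X)%:R.
Proof.
rewrite -sum1_card natr_sum big_mkcond /=; apply: eq_bigr => y _.
by case: (y \in X).
Qed.

Lemma signed_indicator_sum (g : {ffun 'I_n -> bool}) C :
  \sum_y signed_indicator g C 0 y =
  #|[set x in C | g x]|%:R - #|[set x in C | ~~ g x]|%:R.
Proof.
rewrite !natr_card_sum -sumrB; apply: eq_bigr => y _; rewrite !mxE !inE /colour_sign.
by case: (y \in C); case: (g y); rewrite ?subr0 ?sub0r.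
Qed.

Lemma antisym_on_component (g : {ffun 'I_n -> bool}) C x y0 :
  C \in components f -> proper_colouring g C -> edge_antisym f x -> y0 \in C ->
  forall y, y \in C -> x 0 y * colour_sign g y = x 0 y0 * colour_sign g y0.
Proof.
move=> C_comp g_prop x_anti y0C; rewrite (component_eq C_comp y0C) in g_prop *.
apply: component_ind => // a b aC fab <-.
have bC : b \in component_of y0 by rewrite -(component_edgeE (component_of_in y0) fab).
rewrite (colour_sign_flip (proper_colouringP g_prop aC bC fab)).
by move/eqP: (x_anti a b fab); rewrite addrC addr_eq0 => /eqP ->; rewrite mulrNN.
Qed.

(* An edge-antisymmetric vector vanishes on every non-bipartite component:
   otherwise the sign of its coordinates would 2-colour the component. *)
Lemma antisym_nonbipartite_eq0 C x : C \in components f -> ~~ bipartite_on f C ->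
  edge_antisym f x -> forall y, y \in C -> x 0 y = 0.
Proof.
move=> C_comp not_bip x_anti y1 y1C; apply/eqP/negPn/negP => x1_nz.
case/negP: not_bip; apply/existsP; exists [ffun y => x 0 y == x 0 y1].
rewrite (component_eq C_comp y1C).
have x_opp a b : f a b -> x 0 b = - x 0 a.
  by move=> fab; move/eqP: (x_anti a b fab); rewrite addrC addr_eq0 => /eqP.
have x_pm : forall y, y \in component_of y1 -> x 0 y = x 0 y1 \/ x 0 y = - x 0 y1.
  apply: component_ind; first by left.
  by move=> a b _ /x_opp -> [] ->; [right | left; rewrite opprK].
have x1_neq : x 0 y1 != - x 0 y1.
  by apply: contra x1_nz; rewrite -addr_eq0 -mulr2n mulrn_eq0.
apply/forallP => a; apply/implyP => aC; apply/forallP => b; apply/implyP => bC.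
apply/implyP => fab.
rewrite !ffunE (x_opp a b fab).
by case: (x_pm a aC) => ->; rewrite ?opprK eqxx (eq_sym (- x 0 y1)) (negbTE x1_neq).
Qed.

Definition bip_comps : {set {set 'I_n}} := [set C in components f | bipartite_on f C].
Definition bal_comps : {set {set 'I_n}} :=
  [set C in components f | balanced_bipartite_on f C].

Definition indicator_mx (S : {set {set 'I_n}}) (col : {set 'I_n} -> {ffun 'I_n -> bool})
  : 'M[algC]_(#|S|, n) :=
  \matrix_(r, y) signed_indicator (col (enum_val r)) (enum_val r) 0 y.

Section IndicatorMatrix.
Variable S : {set {set 'I_n}}.
Variable col : {set 'I_n} -> {ffun 'I_n -> bool}.
Hypothesis S_comp : {subset S <= components f}.

Lemma indicator_mx_row r : row r (indicator_mx S col) =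
  signed_indicator (col (enum_val r)) (enum_val r).
Proof. by apply/rowP => y; rewrite !mxE. Qed.

(* Distinct components are disjoint, so any of their vertices is a private column. *)
Lemma indicator_mx_free : row_free (indicator_mx S col).
Proof.
have S_ne (r : 'I_#|S|) : exists y, y \in enum_val r.
  by have [y ->] := component_ofP (S_comp (enum_valP r)); exists y; apply: component_of_self.
apply: (@private_column_row_free _ _ _ _ (fun r => xchoose (S_ne r))) => [r|r r' rr].
  by rewrite !mxE (xchooseP (S_ne r)) colour_sign_neq0.
rewrite !mxE; case: ifP => // y_in; case/eqP: rr; apply: enum_val_inj.
by rewrite (component_eq (S_comp (enum_valP r')) y_in)
  -(component_eq (S_comp (enum_valP r)) (xchooseP (S_ne r))).
Qed.

Lemma indicator_mx_comb C (C_S : C \in S) (D : 'rV[algC]_#|S|) y : y \in C ->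
  (D *m indicator_mx S col) 0 y = D 0 (enum_rank_in C_S C) * colour_sign (col C) y.
Proof.
move=> yC; set r0 := enum_rank_in C_S C.
have r0_val : enum_val r0 = C by rewrite enum_rankK_in.
rewrite mxE (bigD1 r0) //= big1 => [|r rr]; last first.
  rewrite !mxE; case: ifP => y_in; last by rewrite mulr0.
  case/eqP: rr; apply: enum_val_inj; rewrite r0_val.
  by rewrite (component_eq (S_comp (enum_valP r)) y_in) -(component_eq (S_comp C_S) yC).
by rewrite addr0 !mxE r0_val yC.
Qed.
End IndicatorMatrix.

Lemma bip_comps_comp : {subset bip_comps <= components f}.
Proof. by move=> C; rewrite inE => /andP[]. Qed.

Lemma bip_comps_bip C : C \in bip_comps -> bipartite_on f C.
Proof. by rewrite inE => /andP[]. Qed.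

Definition bip_colouring (C : {set 'I_n}) : {ffun 'I_n -> bool} :=
  odflt [ffun => true] [pick g : {ffun 'I_n -> bool} | proper_colouring g C].

Lemma bip_colouring_proper C : bipartite_on f C -> proper_colouring (bip_colouring C) C.
Proof.
move=> /existsP [g0 g0_prop]; rewrite /bip_colouring; case: pickP => [g|no_g] //=.
by have := no_g g0; rewrite /= [proper_colouring _ _]g0_prop.
Qed.

Definition bip_kernel := indicator_mx bip_comps bip_colouring.

Lemma bip_kernel_antisym r : edge_antisym f (row r bip_kernel).
Proof.
rewrite indicator_mx_row; have Cr := enum_valP r.
exact/signed_indicator_antisym/bip_colouring_proper/bip_comps_bip/Cr/bip_comps_comp.
Qed.

Lemma rank_bip_kernel : \rank bip_kernel = #|bip_comps|.
Proof. exact/eqP/indicator_mx_free/bip_comps_comp. Qed.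

Lemma antisym_sub_bip_kernel x : edge_antisym f x -> (x <= bip_kernel)%MS.
Proof.
move=> x_anti; apply/submxP.
pose coef (C : {set 'I_n}) :=
  if [pick y in C] is Some y0 then x 0 y0 * colour_sign (bip_colouring C) y0 else 0.
exists (\row_r coef (enum_val r)); apply/rowP => y.
have [y_bip|y_nbip] := boolP (component_of y \in bip_comps).
  rewrite (indicator_mx_comb bip_colouring bip_comps_comp y_bip) ?component_of_self //.
  rewrite mxE enum_rankK_in // /coef; case: pickP => [y0 y0C|]; last first.
    by move/(_ y); rewrite component_of_self.
  have g_prop := bip_colouring_proper (bip_comps_bip y_bip).
  have := antisym_on_component (component_of_in y) g_prop x_anti y0C (component_of_self y).
  by move=> <-; rewrite -mulrA colour_sign_sqr mulr1.
have y_nb : ~~ bipartite_on f (component_of y).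
  by apply: contra y_nbip => y_b; rewrite inE component_of_in.
rewrite (antisym_nonbipartite_eq0 (component_of_in y) y_nb x_anti (component_of_self y)).
rewrite mxE big1 // => r _; rewrite !mxE; case: ifP => y_in; last by rewrite mulr0.
move: y_nbip; rewrite -(component_eq (bip_comps_comp (enum_valP r)) y_in).
by rewrite (enum_valP r).
Qed.

Lemma unbalanced_kernel_vec C : C \in bip_comps -> ~~ balanced_bipartite_on f C ->
  exists2 w : 'rV_n, (w <= bip_kernel)%MS & \sum_y w 0 y != 0.
Proof.
move=> C_bip C_unbal; set r := enum_rank_in C_bip C.
exists (row r bip_kernel); first exact: row_sub.
rewrite indicator_mx_row enum_rankK_in // signed_indicator_sum subr_eq0 eqr_nat.
apply: contra C_unbal => C_eq; apply/existsP; exists (bip_colouring C).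
by apply/andP; split; [apply: bip_colouring_proper; apply: bip_comps_bip | ].
Qed.

Lemma bal_comps_comp : {subset bal_comps <= components f}.
Proof. by move=> C; rewrite inE => /andP[]. Qed.

Lemma card_bal_comps_eq : (forall C, C \in bip_comps -> balanced_bipartite_on f C) ->
  #|bal_comps| = #|bip_comps|.
Proof.
move=> all_bal; suff -> : bal_comps = bip_comps by [].
apply/setP => C; rewrite !inE.
apply/andP/andP => [[C_comp /existsP [g /andP [g_prop _]]] | [C_comp C_bip]].
  by split=> //; apply/existsP; exists g.
by split=> //; apply: all_bal; rewrite inE C_comp.
Qed.

Definition bal_colouring (C : {set 'I_n}) : {ffun 'I_n -> bool} :=
  odflt [ffun => true] [pick g : {ffun 'I_n -> bool} |
    proper_colouring g C && (#|[set x in C | g x]| == #|[set x in C | ~~ g x]|)].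

Lemma bal_colouringP C : C \in bal_comps ->
  proper_colouring (bal_colouring C) C /\
  #|[set x in C | bal_colouring C x]| = #|[set x in C | ~~ bal_colouring C x]|.
Proof.
rewrite inE => /andP [_ /existsP [g0 g0_bal]]; rewrite /bal_colouring.
case: pickP => [g /andP [g_prop /eqP g_card] | no_g] //=.
by have := no_g g0; rewrite /= g0_bal.
Qed.
End BipartiteKernel.

(* Given a balanced component C0 = X ∪ Y of f, adjoining the indicator of X
   to the signed indicators of the balanced components gives a subspace of
   dimension #bal + 1 on which x Q(f) x^* <= |sum x|^2: writing x = w + a 1_X,
   w is edge-antisymmetric with sum 0, so only the |X|·|Y| edges between X and
   Y contribute, each at most |a|^2, and |sum x| = |a|·|X|. *)
Section BalancedExtension.
Variable n : nat.
Variable f : rel 'I_n.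
Hypothesis f_sym : symmetric f.
Variable C0 : {set 'I_n}.
Hypothesis C0_bal : C0 \in bal_comps f.

Local Notation g := (bal_colouring f C0).
Local Notation X := [set y in C0 | g y].
Local Notation Y := [set y in C0 | ~~ g y].

Definition class_indicator : 'rV[algC]_n := \row_y (y \in X)%:R.
Definition bal_indicators := indicator_mx (bal_comps f) (bal_colouring f).
Definition bal_extension := col_mx bal_indicators class_indicator.

Lemma card_X_Y : #|X| = #|Y|.
Proof. by have [_ ->] := bal_colouringP C0_bal. Qed.

Lemma bal_colouring_proper : proper_colouring f g C0.
Proof. by have [] := bal_colouringP C0_bal. Qed.

Lemma X_Y_nonempty : exists2 y, y \in X & exists z, z \in Y.
Proof.
have [y0 C0_y0] := component_ofP (bal_comps_comp C0_bal).
have y0C : y0 \in C0 by rewrite C0_y0 component_of_self.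
case gy0: (g y0).
  exists y0; first by rewrite inE y0C gy0.
  have : (0 < #|Y|)%N by rewrite -card_X_Y; apply/card_gt0P; exists y0; rewrite inE y0C gy0.
  by rewrite card_gt0 => /set0Pn.
have : (0 < #|X|)%N by rewrite card_X_Y; apply/card_gt0P; exists y0; rewrite inE y0C gy0.
by rewrite card_gt0 => /set0Pn [y yX]; exists y => //; exists y0; rewrite inE y0C gy0.
Qed.

(* On C0 the balanced indicators are proportional to the colour sign, which
   takes opposite values on X and Y, whereas 1_X is 1 on X and 0 on Y. *)
Lemma class_indicator_notin : ~~ (class_indicator <= bal_indicators)%MS.
Proof.
apply/negP => /submxP [D uD].
have [y /[!inE] /andP [yC gy] [z /[!inE] /andP [zC /negbTE gz]]] := X_Y_nonempty.
have := congr1 (fun m : 'rV[algC]_n => m 0 y) uD.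
have := congr1 (fun m : 'rV[algC]_n => m 0 z) uD.
rewrite /= !(indicator_mx_comb f_sym (bal_colouring f) (@bal_comps_comp _ f) C0_bal) //.
rewrite !mxE !inE yC zC /colour_sign gy gz /= mulrN1.
by move=> /esym/eqP; rewrite oppr_eq0 => /eqP ->; rewrite mulr1 => /eqP; rewrite oner_eq0.
Qed.

Lemma rank_bal_extension : (#|bal_comps f| < \rank bal_extension)%N.
Proof.
have rank_ind : \rank bal_indicators = #|bal_comps f|.
  exact/eqP/indicator_mx_free/bal_comps_comp.
have ind_ext : (bal_indicators <= bal_extension)%MS.
  by rewrite /bal_extension -addsmxE addsmxSl.
have := ltn_leqif (mxrank_leqif_sup ind_ext).
by rewrite col_mx_sub negb_and class_indicator_notin orbT rank_ind.
Qed.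

Lemma edge_term_bound (w : 'rV[algC]_n) (a : algC) i j : edge_antisym f w ->
  (f i j)%:R * (((w 0 i + a * class_indicator 0 i) + (w 0 j + a * class_indicator 0 j)) *
                ((w 0 i + a * class_indicator 0 i) + (w 0 j + a * class_indicator 0 j))^*)
  <= a * a^* * ((i \in X)%:R * (j \in Y)%:R + (i \in Y)%:R * (j \in X)%:R).
Proof.
move=> w_anti.
have bound_ge0 : 0 <= a * a^* * ((i \in X)%:R * (j \in Y)%:R + (i \in Y)%:R * (j \in X)%:R).
  by rewrite mulr_ge0 ?mul_conjC_ge0 // addr_ge0 // mulr_ge0 ?ler0n.
case fij: (f i j); last by rewrite mul0r.
rewrite mul1r addrACA (w_anti i j fij) add0r -mulrDr !mxE !inE.
have C0_comp := bal_comps_comp C0_bal; have edgeE := component_edgeE f_sym C0_comp fij.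
have [iC|iC] := boolP (i \in C0); last first.
  by rewrite -edgeE (negbTE iC) !mulr0n !(addr0, mulr0, mul0r).
have jC : j \in C0 by rewrite -edgeE.
have gij := proper_colouringP bal_colouring_proper iC jC fij.
rewrite jC /=; case: (g i) (g j) gij => [] [] //= _.
  by rewrite addr0 !mulr1 mul0r addr0 rmorph1 mulr1.
by rewrite add0r mulr1 mul0r mul1r add0r rmorph1 mulr1.
Qed.

Lemma qf_bal_extension_le x : (x <= bal_extension)%MS ->
  qf (signless_lap f) x <= (\sum_y x 0 y) * (\sum_y x 0 y)^*.
Proof.
move=> /submxP [D ->]; rewrite -[D]hsubmxK.
move: (lsubmx D) (rsubmx D) => D1 a; rewrite /bal_extension mul_row_col.
set w := D1 *m bal_indicators.
have w_anti : edge_antisym f w.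
  apply: (edge_antisym_submx (W := bal_indicators)); last exact: submxMl.
  move=> r; rewrite indicator_mx_row; have C_bal := enum_valP r.
  have [g_prop _] := bal_colouringP C_bal.
  by apply: signed_indicator_antisym => //; apply: bal_comps_comp.
have w_sum : \sum_y w 0 y = 0.
  under eq_bigr => y _ do rewrite mxE.
  rewrite exchange_big /= big1 // => r _.
  rewrite -mulr_sumr; under eq_bigr => y _ do rewrite mxE.
  have [_ r_card] := bal_colouringP (enum_valP r).
  by rewrite signed_indicator_sum r_card subrr mulr0.
set a0 := a 0 0.
have xE y : (w + a *m class_indicator) 0 y = w 0 y + a0 * class_indicator 0 y.
  by rewrite mxE [(a *m _) 0 y]mxE big_ord1.
under eq_bigr => y _ do rewrite xE.
rewrite big_split /= w_sum add0r -mulr_sumr.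
have -> : \sum_y class_indicator 0 y = #|X|%:R.
  by rewrite natr_card_sum; apply: eq_bigr => y _; rewrite mxE.
rewrite -(ler_pM2l (ltr0n _ 2)) qf_signless_lap //.
under eq_bigr => i _ do under eq_bigr => j _ do rewrite !xE.
apply: le_trans (_ : \sum_i \sum_j a0 * a0^* * ((i \in X)%:R * (j \in Y)%:R +
    (i \in Y)%:R * (j \in X)%:R) <= _).
  by apply: ler_sum => i _; apply: ler_sum => j _; apply: edge_term_bound.
have sum_prod2 (p q : 'I_n -> algC) c :
    \sum_i \sum_j c * (p i * q j + q i * p j) =
    c * ((\sum_i p i) * (\sum_j q j) + (\sum_i q i) * (\sum_j p j)).
  under eq_bigr => i _ do rewrite -mulr_sumr big_split /= -!mulr_sumr.
  by rewrite -mulr_sumr big_split /= !mulr_suml.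
rewrite sum_prod2 -!natr_card_sum card_X_Y rmorphM /= conjC_nat.
by rewrite le_eqVlt; apply/orP; left; apply/eqP; ring.
Qed.
End BalancedExtension.

Lemma deg_add_compl n (e : rel 'I_n) i : simple_graph e ->
  (deg e i + deg (compl_graph e) i)%N = n.-1.
Proof.
move=> [_ e_irr]; rewrite /deg -cardsUI.
have -> : [set j | e i j] :&: [set j | compl_graph e i j] = set0.
  by apply/setP => j; rewrite !inE /compl_graph; case: (e i j); rewrite ?andbF.
have -> : [set j | e i j] :|: [set j | compl_graph e i j] = [set~ i].
  apply/setP => j; rewrite !inE /compl_graph.
  have [<-|ij] := eqVneq i j; first by rewrite e_irr /= ?eqxx ?andbF.
  by case: (e i j).
by rewrite cards0 addn0 cardsC1 card_ord.
Qed.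

Lemma signless_lap_shift_compl n (e : rel 'I_n) : simple_graph e ->
  signless_lap e - (n%:R - 2%:R)%:M = const_mx 1 - signless_lap (compl_graph e).
Proof.
move=> e_simple; have [_ e_irr] := e_simple.
apply/matrixP => i j; rewrite !mxE.
have [<-|ij] := eqVneq i j; last first.
  rewrite /compl_graph ij /= !mulr0n !mul0r !addr0 subr0.
  by case: (e i j); rewrite ?subrr ?subr0.
rewrite e_irr /compl_graph eqxx /= mulr1n !mul1r !add0r.
have n_pos : (0 < n)%N := leq_ltn_trans (leq0n i) (ltn_ord i).
have := congr1 (fun m => m%:R : algC) (deg_add_compl i e_simple); rewrite natrD => deg_sum.
have -> : (n%:R : algC) = (n.-1)%:R + 1 by rewrite -[in LHS](prednK n_pos) -addn1 natrD.
by rewrite -deg_sum; ring.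
Qed.

Lemma signless_lap_herm n (e : rel 'I_n) : symmetric e -> signless_lap e \is hermsymmx.
Proof.
move=> e_sym; apply/is_hermitianmxP; rewrite expr0 scale1r.
apply/matrixP => i j; rewrite !mxE rmorphD rmorphM /= !conjC_nat e_sym eq_sym.
by have [->|] := eqVneq j i; rewrite ?mulr0n ?mul0r.
Qed.

Lemma compl_graph_sym n (e : rel 'I_n) : simple_graph e -> symmetric (compl_graph e).
Proof. by move=> [e_sym _] i j; rewrite /compl_graph eq_sym e_sym. Qed.

Definition sum_zero_mx n := kermx (const_mx 1 : 'M[algC]_(n, 1)).

Lemma sum_zero_mxE n (x : 'rV[algC]_n) : (x <= sum_zero_mx n)%MS = (\sum_y x 0 y == 0).
Proof.
rewrite sub_kermx; apply/eqP/eqP => [/matrixP /(_ 0 0)|x_sum].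
  by rewrite !mxE => x_ker; apply: etrans x_ker; apply: eq_bigr => y _; rewrite mxE mulr1.
apply/matrixP => i j; rewrite !ord1 !mxE -{2}x_sum; apply: eq_bigr => y _.
by rewrite mxE mulr1.
Qed.

Lemma rank_sum_zero_mx n : (0 < n)%N -> \rank (sum_zero_mx n) = n.-1.
Proof.
move=> n_pos; rewrite mxrank_ker.
suff -> : \rank (const_mx 1 : 'M[algC]_(n, 1)) = 1%N by rewrite subn1.
apply/eqP; rewrite eqn_leq rank_leq_col lt0n mxrank_eq0.
by apply/eqP => /matrixP /(_ (Ordinal n_pos) 0) /eqP; rewrite !mxE oner_eq0.
Qed.

Section Threshold.
Variable n : nat.
Variable e : rel 'I_n.
Hypothesis e_simple : simple_graph e.
Hypothesis n_pos : (0 < n)%N.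

Local Notation f := (compl_graph e).
Local Notation A := (signless_lap e).
Local Notation c := (n%:R - 2%:R : algC).
Local Notation K := (bip_kernel f).
Local Notation O := (sum_zero_mx n).

Let f_sym : symmetric f := compl_graph_sym e_simple.
Let A_herm : A \is hermsymmx := signless_lap_herm e_simple.1.
Let c_real : c \is Num.real. Proof. by rewrite rpredB // realn. Qed.

Lemma qf_shift x :
  qf (A - c%:M) x = (\sum_y x 0 y) * (\sum_y x 0 y)^* - qf (signless_lap f) x.
Proof. by rewrite signless_lap_shift_compl // qf_sub qf_all_ones. Qed.

Lemma qf_shift_sum_zero x : (x <= O)%MS -> qf (A - c%:M) x = - qf (signless_lap f) x.
Proof. by rewrite sum_zero_mxE qf_shift => /eqP ->; rewrite mul0r sub0r. Qed.

(* The form is <= 0 on the hyperplane, so at most one eigenvalue exceeds c. *)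
Lemma n_eig_gt_le1 : (n_eig_gt A c <= 1)%N.
Proof.
suff : (n_eig_gt A c + \rank O <= n)%N by rewrite rank_sum_zero_mx //; lia.
apply: n_eig_gt_add_rank_le => // x xO.
by rewrite qf_shift_sum_zero // oppr_le0 qf_signless_lap_ge0.
Qed.

(* On the hyperplane the form is >= 0 only on the kernel of Q(f), so the
   eigenvalues >= c are at most dim (K ∩ O) + 1. *)
Lemma n_eig_ge_le_cap : (n_eig_ge A c <= \rank (K :&: O) + 1)%N.
Proof.
suff : (n_eig_ge A c + \rank O <= n + \rank (K :&: O))%N.
  by rewrite rank_sum_zero_mx //; lia.
apply: n_eig_ge_add_rank_le => // x xO; rewrite qf_shift_sum_zero // oppr_ge0 => qf_le0.
apply/antisym_sub_bip_kernel/qf_signless_lap_eq0 => //.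
by apply/eqP; rewrite eq_le qf_le0 qf_signless_lap_ge0.
Qed.

(* On K the form of A - cI is |sum x|^2 >= 0. *)
Lemma bip_le_n_eig_ge : (#|bip_comps f| <= n_eig_ge A c)%N.
Proof.
rewrite -rank_bip_kernel //; apply: rank_le_n_eig_ge => // x xK.
rewrite qf_shift edge_antisym_qf0 ?subr0 ?mul_conjC_ge0 //.
exact: edge_antisym_submx (bip_kernel_antisym f_sym) xK.
Qed.

(* On the balanced extension the form of A - cI is >= 0. *)
Lemma bal_lt_n_eig_ge C0 : C0 \in bal_comps f -> (#|bal_comps f| < n_eig_ge A c)%N.
Proof.
move=> C0_bal; apply: leq_trans (rank_bal_extension f_sym C0_bal) _.
apply: rank_le_n_eig_ge => // x xW; rewrite qf_shift subr_ge0.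
by have := qf_bal_extension_le f_sym C0_bal xW.
Qed.

(* An unbalanced bipartite component has a kernel vector off the hyperplane. *)
Lemma unbalanced_cap_lt :
  [exists C in bip_comps f, ~~ balanced_bipartite_on f C] ->
  (\rank (K :&: O) < #|bip_comps f|)%N.
Proof.
move=> /exists_inP [C C_bip C_unbal].
suff : (\rank (K :&: O) < \rank K)%N by rewrite rank_bip_kernel.
have [w wK w_sum] := unbalanced_kernel_vec C_bip C_unbal.
have := ltmxErank (K :&: O)%MS K; rewrite capmxSl /= => <-; rewrite ltmxE capmxSl /=.
by apply: contra w_sum => /(submx_trans wK); rewrite sub_capmx sum_zero_mxE => /andP [].
Qed.

Lemma q_eig_threshold k : (k < n)%N ->
  q_eig e k.+1 = c <-> (n_eig_gt A c <= k)%N /\ (k < n_eig_ge A c)%N.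
Proof. exact: nth_eigs_desc_eq. Qed.
End Threshold.

Local Close Scope sesquilinear_scope.

Theorem theorem2 (n k : nat) (e : rel 'I_n) :
  simple_graph e -> (1 <= k)%N -> (k < n)%N ->
  (q_eig e k.+1 = n%:R - 2%:R :> algC) <->
  ((k <= n_bal_bip_comp (compl_graph e))%N \/
   (k.+1 <= n_bip_comp (compl_graph e))%N).
Proof.
move=> e_simple k_pos kn; have n_pos : (0 < n)%N by apply: leq_ltn_trans kn.
rewrite q_eig_threshold //.
have := n_eig_gt_le1 e_simple n_pos; have := n_eig_ge_le_cap e_simple n_pos.
rewrite /n_bal_bip_comp /n_bip_comp -/(bal_comps _) -/(bip_comps _).
split=> [[_ k_lt] | [k_bal | k_bip]].
- have [unbal | all_bal] := boolP [exists C in bip_comps (compl_graph e),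
                                    ~~ balanced_bipartite_on (compl_graph e) C].
    by have := unbalanced_cap_lt e_simple unbal; right; lia.
  rewrite card_bal_comps_eq; last first.
    by move=> C C_bip; move: all_bal => /exists_inPn/(_ C C_bip)/negPn.
  have := rank_bip_kernel (compl_graph_sym e_simple).
  by have := mxrankS (capmxSl (bip_kernel (compl_graph e)) (sum_zero_mx n)); left; lia.
- have [C0 C0_bal] : exists C0, C0 \in bal_comps (compl_graph e).
    by apply/set0Pn; rewrite -card_gt0; apply: leq_trans k_bal.
  by have := bal_lt_n_eig_ge e_simple C0_bal; lia.
- by have := bip_le_n_eig_ge e_simple; lia.
Qed.
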